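(* Let $\Pi$ be an $m$-round protocol, let $\delta\in(0,\frac12]$ and let $\xi\in(0,1)$. If $\xi\le\frac{\delta^2}{16m^2}$, then there exists $j\in\{0,1,\ldots,\lceil m/\sqrt\xi\rceil\}$ such that $\mathrm{border}_\Pi(\delta',\xi)\le m\sqrt\xi$ for $\delta'=\delta/2+2j\xi\in[\frac\delta2,\delta]$.
   Context: An $m$-round single-bit-message protocol is identified with the complete binary tree of height $m$, with leaf distribution $L_\Pi$; for a node $u$, $\mathrm{val}(\Pi_u)$ is the expected common output conditioned on the transcript starting with $u$. For $\delta,\xi$: $\mathrm{Border}^{\delta,\xi}_\Pi=\{u\text{ non-leaf}:\mathrm{val}(\Pi_u)\in(\delta-\xi,\delta+\xi]\text{ or }\mathrm{val}(\Pi_u)\in[1-\delta-\xi,1-\delta+\xi)\}$ and $\mathrm{border}_\Pi(\delta,\xi)=\Pr_{\ell\leftarrow L_\Pi}[\ell\in\mathrm{desc}(\mathrm{Border}^{\delta,\xi}_\Pi)]$, where $\mathrm{desc}(\mathcal S)$ is the set of nodes with an ancestor (possibly itself) in $\mathcal S$. *)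

From HB Require Import structures.
From mathcomp Require Import all_boot all_order all_algebra.
From mathcomp Require Import reals.
Set Implicit Arguments. Unset Strict Implicit. Unset Printing Implicit Defensive.
Import Order.TTheory GRing.Theory Num.Theory.
Local Open Scope ring_scope.

(* An m-round single-bit-message protocol is identified with the complete
   binary tree of height m.  Nodes are bit strings u : seq bool with
   size u <= m; leaves are the m.-tuple bool.  The protocol is given by its
   leaf distribution p (nonnegative, summing to 1) and the common output
   out l \in {0,1} at each leaf l. *)

Section Protocol.
Variables (R : realType) (m : nat).
Variables (p : m.-tuple bool -> R) (out : m.-tuple bool -> bool).

Definition is_prefix (u : seq bool) (l : m.-tuple bool) : bool :=
  take (size u) l == u.

Definition node_prob (u : seq bool) : R :=
  \sum_(l | is_prefix u l) p l.

(* val(Pi_u) : expected common output conditioned on the transcript starting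
   with u (irrelevant, and set to 0 by the convention x/0 = 0, when
   node_prob u = 0) *)
Definition val (u : seq bool) : R :=
  (\sum_(l | is_prefix u l) p l * (out l)%:R) / node_prob u.

Definition in_border_interval (d xi x : R) : bool :=
  ((d - xi < x) && (x <= d + xi)) || ((1 - d - xi <= x) && (x < 1 - d + xi)).

(* the non-leaf ancestors of leaf l are exactly take n l for n < m;
   border(d, xi) = Pr_{l <- L_Pi}[ l in desc(Border^{d,xi}) ] *)
Definition border (d xi : R) : R :=
  \sum_(l : m.-tuple bool | [exists n : 'I_m, in_border_interval d xi (val (take n (tval l)))]) p l.

End Protocol.

From Pilot Require Import Defs.
From HB Require Import structures.
From mathcomp Require Import all_boot all_order all_algebra.
From mathcomp Require Import reals.
From mathcomp Require Import ring lra.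
Set Implicit Arguments. Unset Strict Implicit. Unset Printing Implicit Defensive.
Import Order.TTheory GRing.Theory Num.Theory.
Local Open Scope ring_scope.

(* The shifts d_j = delta/2 + 2 j xi are 2 xi apart, so a value lies in the
   window (d_j - xi, d_j + xi] of at most one shift, and in the mirrored window
   [1 - d_j - xi, 1 - d_j + xi) of at most one more.  A leaf has m non-leaf
   ancestors, hence lies below a border node for at most 2m shifts, and the
   borders of the J + 1 shifts, J = ceil (m / sqrt xi), sum to at most 2m.
   For m >= 2 some shift therefore has border at most 2m / (J + 1) <= m sqrt xi.
   For m = 1 only the root matters, and as xi < 1 forces J >= 2, one of the
   at least three shifts avoids it, giving border 0. *)

Definition delta_shift (R : realDomainType) (d xi : R) (j : nat) : R :=
  d + 2 * j%:R * xi.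

Definition in_window (R : realDomainType) (c xi x : R) : bool :=
  (c - xi < x) && (x <= c + xi).

Lemma in_border_intervalE (R : realType) (d xi x : R) :
  in_border_interval d xi x = in_window d xi x || in_window d xi (1 - x).
Proof.
rewrite /in_border_interval /in_window; congr (_ || _).
by apply/andP/andP => -[lo hi]; split; lra.
Qed.

Lemma in_window_shift_inj (R : realDomainType) (d xi x : R) (i j : nat) :
  0 < xi -> in_window (delta_shift d xi i) xi x ->
  in_window (delta_shift d xi j) xi x -> i = j.
Proof.
rewrite /in_window /delta_shift => xi_gt0 /andP[lo_i hi_i] /andP[lo_j hi_j].
have leq_of_ltr_succ (a b : nat) : a%:R * xi < b%:R * xi + xi -> (a <= b)%N.
  by rewrite -[X in _ < _ + X]mul1r -mulrDl natr1 ltr_pM2r // ltr_nat ltnS.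
by apply/eqP; rewrite eqn_leq !leq_of_ltr_succ //; lra.
Qed.

Lemma card_window_shift_le1 (R : realDomainType) (d xi x : R) (N : nat) :
  0 < xi -> (#|[set j : 'I_N | in_window (delta_shift d xi j) xi x]| <= 1)%N.
Proof.
move=> xi_gt0; apply/card_le1_eqP => i j.
rewrite !inE => win_i win_j; apply: val_inj.
exact: in_window_shift_inj xi_gt0 win_j win_i.
Qed.

Lemma card_border_shift_le2 (R : realType) (d xi x : R) (N : nat) :
  0 < xi ->
  (#|[set j : 'I_N | in_border_interval (delta_shift d xi j) xi x]| <= 2)%N.
Proof.
move=> xi_gt0.
rewrite (_ : [set j | _] = [set j : 'I_N | in_window (delta_shift d xi j) xi x]
    :|: [set j : 'I_N | in_window (delta_shift d xi j) xi (1 - x)]); last first.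
  by apply/setP => j; rewrite !inE in_border_intervalE.
apply: leq_trans (leq_card_setU _ _) _.
exact: leq_add (card_window_shift_le1 _ _ _ xi_gt0)
  (card_window_shift_le1 _ _ _ xi_gt0).
Qed.

Lemma card_exists_le_sum (I : finType) (n : nat) (P : I -> 'I_n -> bool) :
  (#|[set i | [exists k, P i k]]| <= \sum_(k < n) #|[set i | P i k]|)%N.
Proof.
rewrite (_ : [set i | _] = \bigcup_(k < n) [set i | P i k]); last first.
  apply/setP => i; rewrite inE; apply/existsP/bigcupP => [[k Pik] | [k _]].
    by exists k; rewrite ?inE.
  by rewrite inE; exists k.
elim/big_rec2: _ => [|k A s _ le_A_s]; first by rewrite cards0.
exact: leq_trans (leq_card_setU _ _) (leq_add _ le_A_s).
Qed.

Lemma card_exists_border_shift_le (R : realType) (d xi : R) (N m : nat)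
    (x : 'I_m -> R) : 0 < xi ->
  (#|[set j : 'I_N | [exists n, in_border_interval (delta_shift d xi j) xi (x n)]]|
    <= 2 * m)%N.
Proof.
move=> xi_gt0; apply: leq_trans (card_exists_le_sum _) _.
rewrite mulnC -[X in (_ <= X * _)%N]card_ord -sum_nat_const.
by apply: leq_sum => n _; apply: card_border_shift_le2.
Qed.

Lemma exists_le_of_sum_le (R : realDomainType) (N : nat) (F : 'I_N -> R) (b : R) :
  (0 < N)%N -> \sum_(j < N) F j <= N%:R * b -> exists j, F j <= b.
Proof.
move=> N_gt0 sum_le; apply/existsP; apply: contraLR sum_le => /existsPn all_gt.
have -> : N%:R * b = \sum_(j < N) b by rewrite sumr_const card_ord mulr_natl.
rewrite -ltNge; apply: ltr_sum => [|j _]; last by rewrite ltNge all_gt.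
by apply/hasP; exists (Ordinal N_gt0); rewrite ?mem_index_enum.
Qed.

Lemma exists_not_in_border_shift (R : realType) (d x xi : R) (N : nat) :
  (2 < N)%N -> 0 < xi ->
  exists j : 'I_N, ~~ in_border_interval (delta_shift d xi j) xi x.
Proof.
move=> N_gt2 xi_gt0; apply/existsP; rewrite -negb_forall; apply: contraTN N_gt2.
move=> /forallP all_in; rewrite -leqNgt -[X in (X <= _)%N]card_ord -cardsT.
rewrite (_ : setT = [set j : 'I_N | in_border_interval (delta_shift d xi j) xi x]).
  exact: card_border_shift_le2.
by apply/setP => j; rewrite !inE -[in_border_interval _ _ _]negbK all_in.
Qed.

Section BorderShifts.
Variables (R : realType) (m : nat).
Variables (p : m.-tuple bool -> R) (out : m.-tuple bool -> bool).

Lemma border_eq0_of_root (d xi : R) : (m <= 1)%N ->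
  ~~ in_border_interval d xi (Defs.val p out [::]) -> border p out d xi = 0.
Proof.
move=> m_le1 root_out; apply: big1 => l /existsP[n].
have /eqP -> : nat_of_ord n == 0%N by rewrite -leqn0 -ltnS (leq_trans (ltn_ord n)).
by rewrite take0 (negbTE root_out).
Qed.

Hypotheses (p_ge0 : forall l, 0 <= p l) (p_sum1 : \sum_l p l = 1).

Lemma sum_border_shift_le (d xi : R) (N : nat) : 0 < xi ->
  \sum_(j < N) border p out (delta_shift d xi j) xi <= 2 * m%:R.
Proof.
move=> xi_gt0.
rewrite /border (exchange_big_dep xpredT) //=.
apply: le_trans (_ : \sum_l p l * (2 * m)%:R <= _); last first.
  by rewrite -mulr_suml p_sum1 mul1r natrM.
apply: ler_sum => l _; rewrite sumr_const -[p l *+ _]mulr_natr ler_wpM2l //.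
rewrite ler_nat; apply: leq_trans
  (card_exists_border_shift_le d N (fun n => Defs.val p out (take n l)) xi_gt0).
by apply/eq_leq/eq_card => j; rewrite inE.
Qed.

End BorderShifts.

Theorem lemma4p26 (R : realType) (m : nat)
    (p : m.-tuple bool -> R) (out : m.-tuple bool -> bool)
    (p_ge0 : forall l, 0 <= p l) (p_sum1 : \sum_l p l = 1)
    (delta xi : R)
    (hdelta : 0 < delta <= 1 / 2) (hxi : 0 < xi < 1)
    (hsmall : xi <= delta ^+ 2 / (16 * (m%:R) ^+ 2)) :
  exists j : nat,
    (j%:Z <= Num.ceil (m%:R / Num.sqrt xi))%R /\
    border p out (delta / 2 + 2 * j%:R * xi) xi <= m%:R * Num.sqrt xi.
Proof.
have [xi_gt0 xi_lt1] := andP hxi.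
have m_gt0 : (0 < m)%N.
  case: m hsmall {p out p_ge0 p_sum1} => //.
  by rewrite expr0n /= mulr0 invr0 mulr0; lra.
set s := Num.sqrt xi.
have s_gt0 : 0 < s by rewrite sqrtr_gt0.
have s_sq : s ^+ 2 = xi by rewrite sqr_sqrtr // ltW.
set J := `|Num.ceil (m%:R / s)|%N.
have J_ceil : J%:Z = Num.ceil (m%:R / s).
  have ratio_ge0 : 0 <= m%:R / s by rewrite divr_ge0 // ltW.
  by rewrite gez0_abs // ceil_ge0; lra.
have J_ge : m%:R <= J%:R * s.
  by rewrite -ler_pdivrMr // -[J%:R]/(J%:Z%:~R) J_ceil ceil_ge.
suff [j border_le] : exists j : 'I_J.+1,
    border p out (delta_shift (delta / 2) xi j) xi <= m%:R * s.
  by exists j; rewrite -J_ceil lez_nat -ltnS.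
have [m_ge2 | m_le1] := ltnP 1 m.
  apply: exists_le_of_sum_le => //.
  apply: le_trans (sum_border_shift_le out p_ge0 p_sum1 _ _ xi_gt0) _.
  have m_ge2R : (2 : R) <= m%:R by rewrite (ler_nat R 2).
  rewrite -natr1; nra.
have m1 : m = 1%N by apply/eqP; rewrite eqn_leq m_le1.
have J_gt1 : (2 < J.+1)%N.
  rewrite ltnS leqNgt; apply/negP => J_le1.
  have : J%:R <= 1 :> R by rewrite (ler_nat R J 1) -ltnS.
  by move: J_ge; rewrite m1; nra.
have [j root_j] :=
  exists_not_in_border_shift (delta / 2) (Defs.val p out [::]) J_gt1 xi_gt0.
by exists j; rewrite border_eq0_of_root // mulr_ge0 // ltW.
Qed.
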